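(* Let $m\ge3$, let $\tilde\omega$ be a symmetric fractional polymorphism of $\Gamma$ of arity $m-1$, and let $\tilde{\mathbb G}$ and $\mathbb G$ be as below. Then $\tilde{\mathbb G}\subseteq\mathbb G$.
   Context: $D$ finite, $\Gamma$ a finite set of cost functions $f:D^n\to\mathbb Q\cup\{\infty\}$, $\mathrm{dom} f=\{x:f(x)<\infty\}$. A $k$-ary fractional polymorphism: probability distribution $\nu$ on operations $g:D^k\to D$ with $\sum\nu(g)f(g(x^1,\dots,x^k))\le\frac1k\sum f(x^i)$ for $f\in\Gamma$, $x^i\in\mathrm{dom} f$ (componentwise); symmetric if all support operations are invariant under all permutations of arguments. Maps $\mathbf g=(g_1,\dots,g_m):D^m\to D^m$ act on $[D^n]^m$ coordinatewise; $f^m(x)=\frac1m\sum f(x^i)$; generalized fractional polymorphism of arity $m\to m$: finitely supported probability distribution $\rho$ on maps with $\sum\rho(\mathbf g)f^m(\mathbf g(x))\le f^m(x)$ for $f\in\Gamma$, $x\in[\mathrm{dom} f]^m$. $\Omega=\{\mathbf g:(g_{\pi(1)},\dots,g_{\pi(m)})(x)=\mathbf g(x_{\pi(1)},\dots,x_{\pi(m)})\ \forall x\in D^m,\pi\}$. $\omega$: generalized fractional polymorphism of arity $m\to m$ with support in $\Omega$ containing the support of every other such; $\mathbb G=\{\mathbf g_k\circ\dots\circ\mathbf g_1:k\ge0,\mathbf g_i\in\mathrm{supp}(\omega)\}$. For $x\in D^m$ and $k\in[m]$, $x_{-k}\in D^{m-1}$ is $x$ with the $k$-th entry deleted. For $s\in\mathrm{supp}(\tilde\omega)$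 define $\mathbb 1^s:D^m\to D^m$ by $\mathbb 1^s(x)=(s(x_{-1}),\dots,s(x_{-m}))$, and $\tilde{\mathbb G}=\{\mathbb 1^{s_k}\circ\dots\circ\mathbb 1^{s_1}:k\ge0,s_i\in\mathrm{supp}(\tilde\omega)\}$ (identity for $k=0$). *)

From HB Require Import structures.
From Stdlib Require List.
From mathcomp Require Import all_boot all_order all_algebra all_fingroup.
Set Implicit Arguments. Unset Strict Implicit. Unset Printing Implicit Defensive.
Import Order.TTheory GRing.Theory Num.Theory.
Local Open Scope ring_scope.

Definition vec (D : finType) (k : nat) := {ffun 'I_k -> D}.
Definition op (D : finType) (k : nat) := {ffun vec D k -> D}.
(* maps g = (g_1,...,g_m) : D^m -> D^m *)
Definition gmap (D : finType) (m : nat) := {ffun 'I_m -> op D m}.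

(* cost function f : D^n -> Q \cup {oo}; None encodes oo *)
Record cost (D : finType) := Cost { c_ar : nat; c_fun : vec D c_ar -> option rat }.
Arguments c_ar {D} _.
Arguments c_fun {D} _ _.

Definition indom (D : finType) (f : cost D) (x : vec D (c_ar f)) : bool :=
  c_fun f x != None.

(* finite value (only used on dom f) *)
Arguments indom {D} f x.
Definition fin (R : realFieldType) (v : option rat) : R :=
  if v is Some q then ratr q else 0.

(* applying a k-ary operation coordinatewise to x = (x^1,...,x^k), x^i in D^n *)
Definition opapp (D : finType) (k n : nat) (o : op D k) (x : 'I_k -> vec D n) : vec D n :=
  [ffun j => o [ffun i => x i j]].

Definition gapp (D : finType) (m : nat) (g : gmap D m) (y : vec D m) : vec D m :=
  [ffun i => g i y].

Definition fpol (R : realFieldType) (D : finType) (Gamma : seq (cost D)) (k : nat)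
  (nu : {ffun op D k -> R}) : Prop :=
  [/\ (forall o, 0 <= nu o), \sum_o nu o = 1 &
   forall f, Stdlib.Lists.List.In f Gamma -> forall x : 'I_k -> vec D (c_ar f),
     (forall i, indom f (x i)) ->
     (forall o, 0 < nu o -> indom f (opapp o x)) /\
     \sum_o nu o * fin R (c_fun f (opapp o x))
       <= k%:R^-1 * \sum_i fin R (c_fun f (x i))].

Definition symmetric_fpol (R : realFieldType) (D : finType) (k : nat)
  (nu : {ffun op D k -> R}) : Prop :=
  forall o, 0 < nu o -> forall (pi : {perm 'I_k}) (y : vec D k),
    o [ffun j => y (pi j)] = o y.

Definition gfpol (R : realFieldType) (D : finType) (Gamma : seq (cost D)) (m : nat)
  (rho : {ffun gmap D m -> R}) : Prop :=
  [/\ (forall g, 0 <= rho g), \sum_g rho g = 1 &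
   forall f, Stdlib.Lists.List.In f Gamma -> forall x : 'I_m -> vec D (c_ar f),
     (forall i, indom f (x i)) ->
     (forall g, 0 < rho g -> forall i, indom f (opapp (g i) x)) /\
     \sum_g rho g * (m%:R^-1 * \sum_i fin R (c_fun f (opapp (g i) x)))
       <= m%:R^-1 * \sum_i fin R (c_fun f (x i))].

Definition inOmega (D : finType) (m : nat) (g : gmap D m) : Prop :=
  forall (pi : {perm 'I_m}) (y : vec D m) (i : 'I_m),
    g (pi i) y = g i [ffun j => y (pi j)].

(* composition g_k o ... o g_1 for s = [:: g_1; ...; g_k] *)
Definition gcomp (D : finType) (m : nat) (s : seq (gmap D m)) : vec D m -> vec D m :=
  foldl (fun acc g => gapp g \o acc) id s.

Definition GG (R : realFieldType) (D : finType) (m : nat) (omega : {ffun gmap D m -> R})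
  (h : vec D m -> vec D m) : Prop :=
  exists s : seq (gmap D m), all (fun g => 0 < omega g) s /\ h =1 gcomp s.

(* x_{-k}: delete the k-th entry *)
Definition del (D : finType) (m : nat) (y : vec D m) (k : 'I_m) : vec D m.-1 :=
  [ffun j : 'I_m.-1 => y (insubd k (bump k j))].

(* 1^s(y) = (s(y_{-1}),...,s(y_{-m})) *)
Definition one_s (D : finType) (m : nat) (s : op D m.-1) (y : vec D m) : vec D m :=
  [ffun k => s (del y k)].

Definition tcomp (D : finType) (m : nat) (s : seq (op D m.-1)) : vec D m -> vec D m :=
  foldl (fun acc o => one_s o \o acc) id s.

Definition GGt (R : realFieldType) (D : finType) (m : nat) (nut : {ffun op D m.-1 -> R})
  (h : vec D m -> vec D m) : Prop :=
  exists s : seq (op D m.-1), all (fun o => 0 < nut o) s /\ h =1 tcomp s.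

From HB Require Import structures.
From mathcomp Require Import all_boot all_order all_algebra all_fingroup.
Import Order.TTheory GRing.Theory Num.Theory.
Local Open Scope ring_scope.

Set Implicit Arguments.
Unset Strict Implicit.
Unset Printing Implicit Defensive.

(* Pushing
   tilde omega forward along s |-> 1^s gives a distribution rho on maps, which
   lies in Omega because s is symmetric, and is a generalized fractional
   polymorphism because averaging the inequality for s over the m deletions
   x_{-k} counts every x^i exactly m-1 times.  By maximality of omega, every
   1^s with s in supp(tilde omega) lies in supp(omega), so every composite of
   such maps lies in G. *)

Section PushForward.
Variables (R : numDomainType) (T U : finType) (F : T -> U) (nu : {ffun T -> R}).

Definition pushforward : {ffun U -> R} := [ffun u => \sum_(t | F t == u) nu t].

Lemma sum_pushforward (X : U -> R) :
  \sum_u pushforward u * X u = \sum_t nu t * X (F t).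
Proof.
rewrite [RHS](partition_big F xpredT) //=; apply: eq_bigr => u _.
by rewrite ffunE mulr_suml; apply: eq_big => // t /eqP ->.
Qed.

Hypothesis nu_ge0 : forall t, 0 <= nu t.

Lemma pushforward_ge0 u : 0 <= pushforward u.
Proof. by rewrite ffunE; apply: sumr_ge0. Qed.

Lemma pushforward_gt0 t : 0 < nu t -> 0 < pushforward (F t).
Proof.
move=> nut_gt0; rewrite ffunE (bigD1 t) //=.
by rewrite ltr_wpDr //; apply: sumr_ge0.
Qed.

Lemma pushforward_supp u : 0 < pushforward u -> exists2 t, F t = u & 0 < nu t.
Proof.
case: (pickP (fun t => (F t == u) && (0 < nu t))) => [t /andP[/eqP Ftu] | none].
  by exists t.
rewrite ffunE big1 ?ltxx // => t /eqP Ftu.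
by have := none t; rewrite Ftu eqxx lt_neqAle nu_ge0 andbT => /negbFE/eqP.
Qed.

End PushForward.

Lemma sum_sum_lift (V : zmodType) (n : nat) (c : 'I_n.+1 -> V) :
  \sum_(i < n.+1) \sum_(j < n) c (lift i j) = (\sum_i c i) *+ n.
Proof.
have drop_one (i : 'I_n.+1) : \sum_(j < n) c (lift i j) = \sum_k c k - c i.
  by rewrite (bigD1_ord i) //= addrC addrK.
under eq_bigr do rewrite drop_one.
by rewrite sumrB sumr_const card_ord mulrSr addrK.
Qed.

Section OneMap.
Variables (D : finType) (n : nat).

Definition one_gmap (s : op D n) : gmap D n.+1 :=
  [ffun k => [ffun y : vec D n.+1 => s (del y k)]].

Lemma gapp_one_gmap (s : op D n) : gapp (one_gmap s) =1 @one_s D n.+1 s.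
Proof. by move=> y; apply/ffunP=> k; rewrite !ffunE. Qed.

Lemma tcomp_gcomp (ss : seq (op D n)) : @tcomp D n.+1 ss =1 gcomp (map one_gmap ss).
Proof.
suff foldl_eq (a b : vec D n.+1 -> vec D n.+1) : a =1 b ->
    foldl (fun acc s => @one_s D n.+1 s \o acc) a ss =1
    foldl (fun acc g => gapp g \o acc) b (map one_gmap ss) by exact: foldl_eq.
elim: ss a b => [|s ss IH] a b eq_ab //=.
by apply: IH => y /=; rewrite eq_ab gapp_one_gmap.
Qed.

Lemma delE (y : vec D n.+1) k : del y k = [ffun j => y (lift k j)].
Proof.
apply/ffunP=> j; rewrite !ffunE; congr (y _); apply: val_inj.
by rewrite val_insubd (ltn_ord (lift k j)).
Qed.

Lemma opapp_one_gmap (s : op D n) p (x : 'I_n.+1 -> vec D p) k :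
  opapp (one_gmap s k) x = opapp s (fun j => x (lift k j)).
Proof.
apply/ffunP=> i; rewrite !ffunE delE; congr (s _).
by apply/ffunP=> j; rewrite !ffunE.
Qed.

(* For a permutation pi of 'I_n.+1 and k, the permutation of 'I_n taking
   y_{-(pi k)} to (y o pi)_{-k}. *)
Section DeletePerm.
Variables (pi : {perm 'I_n.+1}) (k : 'I_n.+1).

Definition del_perm_fun (j : 'I_n) : 'I_n := odflt j (unlift (pi k) (pi (lift k j))).

Lemma lift_del_perm_fun j : lift (pi k) (del_perm_fun j) = pi (lift k j).
Proof.
have neq : pi k != pi (lift k j) by rewrite (inj_eq perm_inj) neq_lift.
by case: (unlift_some neq) => l eq_l unl; rewrite /del_perm_fun unl eq_l.
Qed.

Lemma del_perm_fun_inj : injective del_perm_fun.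
Proof.
move=> j1 j2 e; apply: (lift_inj (h := k)); apply: (@perm_inj _ pi).
by rewrite -!lift_del_perm_fun e.
Qed.

End DeletePerm.

Lemma one_gmap_inOmega (s : op D n) :
  (forall (pi : {perm 'I_n}) (y : vec D n), s [ffun j => y (pi j)] = s y) ->
  inOmega (one_gmap s).
Proof.
move=> s_sym pi y k; rewrite !ffunE.
rewrite -(s_sym (perm (@del_perm_fun_inj pi k))); congr (s _).
by apply/ffunP=> j; rewrite !delE !ffunE permE lift_del_perm_fun.
Qed.

End OneMap.

Lemma gfpol_pushforward_one_gmap (R : realFieldType) (D : finType)
    (Gamma : seq (cost D)) (n : nat) (nu : {ffun op D n -> R}) :
  (0 < n)%N -> fpol Gamma nu -> gfpol Gamma (pushforward (@one_gmap D n) nu).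
Proof.
move=> n_gt0 [nu_ge0 nu_sum1 nu_fpol]; split.
- exact: pushforward_ge0.
- by rewrite -(eq_bigr _ (fun g _ => mulr1 _)) sum_pushforward;
    under eq_bigr do rewrite mulr1.
move=> f f_in x x_dom.
have nu_del (k : 'I_n.+1) := nu_fpol f f_in (fun j => x (lift k j)) (fun j => x_dom _).
split.
- move=> g /(pushforward_supp nu_ge0) [s <- nu_s] k.
  by rewrite opapp_one_gmap; apply: (nu_del k).1.
rewrite sum_pushforward.
under eq_bigr do rewrite mulrCA mulr_sumr.
rewrite -mulr_sumr exchange_big /=; apply: ler_wpM2l; first by rewrite invr_ge0.
under eq_bigr do under eq_bigr do rewrite opapp_one_gmap.
apply: le_trans (ler_sum _ (fun k _ => (nu_del k).2)) _.
rewrite -[X in X <= _]mulr_sumr (sum_sum_lift (fun k => fin R (c_fun f (x k)))).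
by rewrite -[(\sum_i _) *+ n]mulr_natl mulKf // pnatr_eq0 -lt0n.
Qed.

Theorem proposition7p6 (R : realFieldType) (D : finType) (Gamma : seq (cost D))
  (m : nat) (hm : (3 <= m)%N)
  (omega : {ffun gmap D m -> R})
  (Homega : gfpol Gamma omega)
  (HomegaOmega : forall g, 0 < omega g -> inOmega g)
  (Hmax : forall rho : {ffun gmap D m -> R}, gfpol Gamma rho ->
            (forall g, 0 < rho g -> inOmega g) ->
            forall g, 0 < rho g -> 0 < omega g)
  (nut : {ffun op D m.-1 -> R})
  (Hnut : fpol Gamma nut) (Hsym : symmetric_fpol nut) :
  forall h : vec D m -> vec D m, GGt nut h -> GG omega h.
Proof.
case: m hm omega Homega HomegaOmega Hmax nut Hnut Hsym => // n hm omega _ _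
  Hmax nut Hnut Hsym.
have [nut_ge0 _ _] := Hnut.
set rho := pushforward (@one_gmap D n) nut.
have rho_gfpol : gfpol Gamma rho := gfpol_pushforward_one_gmap (ltnW (hm : (1 < n)%N)) Hnut.
have rho_Omega g : 0 < rho g -> inOmega g.
  by case/(pushforward_supp nut_ge0) => s <- nut_s; apply/one_gmap_inOmega/Hsym.
move=> h [ss [ss_supp eq_h]]; exists (map (@one_gmap D n) ss); split.
- rewrite all_map; apply/allP => s /(allP ss_supp) nut_s /=.
  exact: Hmax rho_gfpol rho_Omega _ (pushforward_gt0 _ nut_ge0 nut_s).
- by move=> y; rewrite eq_h tcomp_gcomp.
Qed.
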